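(* Let $p$ be a prime such that $2^p-1$ is a (Mersenne) prime. Then $2^{p-1}(2^p-1)$ is the only even perfect number which is $3(2p-1)$-$T_0T^\ast$-perfect.
   Context: A perfect number is a positive integer $N$ with $\sigma(N)=2N$. For a positive integer $m$, $T(m)$ denotes the product of all positive divisors of $m$, and $T^\ast(m)$ the product of all unitary divisors of $m$ (divisors $d$ with $\gcd(d,m/d)=1$). For an integer $K\ge 2$, an integer $n>1$ is called $K$-$T_0T^\ast$-perfect if $T(T^\ast(n))=n^K$. *)

From mathcomp Require Import all_boot.
Set Implicit Arguments. Unset Strict Implicit. Unset Printing Implicit Defensive.

Definition sigma (n : nat) : nat := \sum_(d <- divisors n) d.

Definition perfect (N : nat) : Prop := 0 < N /\ sigma N = 2 * N.

Definition T (m : nat) : nat := \prod_(d <- divisors m) d.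

Definition Tstar (m : nat) : nat :=
  \prod_(d <- divisors m | coprime d (m %/ d)) d.

Definition KT0Tstar_perfect (K n : nat) : Prop :=
  2 <= K /\ 1 < n /\ T (Tstar n) = n ^ K.

From mathcomp Require Import all_boot zify.

(* By Euclid-Euler an even perfect number is N = 2^k M with M = 2^(k+1) - 1 prime.
   Its unitary divisors are 1, 2^k, M and N, so T*(N) = N^2. Pairing each divisor d
   of m with m/d gives T(m)^2 = m^d(m), and d(N^2) = (2k+1) * 3, hence
   T(T*(N)) = N^(3(2k+1)). So N is K-T0T*-perfect exactly when K = 3(2k+1), which for
   K = 3(2p-1) means k = p - 1. *)

Set Implicit Arguments.
Unset Strict Implicit.
Unset Printing Implicit Defensive.

Section DivisorsPrimePowerTimesCoprime.

Variables (p m : nat).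
Hypotheses (p_pr : prime p) (p_coprime_m : coprime p m) (m_gt0 : 0 < m).

Let p_gt0 : 0 < p. Proof. exact: prime_gt0. Qed.

Lemma dvdn_pfactorM k d : d %| p ^ k * m ->
  exists i e, [/\ i <= k, e %| m & d = p ^ i * e].
Proof.
elim: k d => [|k IHk] d; first by rewrite mul1n => d_m; exists 0, d; rewrite mul1n.
have [/dvdnP[x ->] | p_ndvd_d] := boolP (p %| d).
  rewrite expnS -mulnA (mulnC p) dvdn_pmul2r // => /IHk[i [e [le_ik e_m ->]]].
  by exists i.+1, e; rewrite expnS mulnAC (mulnC p).
have d_coprime : coprime d (p ^ k.+1).
  by rewrite coprime_sym coprimeXl // prime_coprime.
by rewrite Gauss_dvdr // => d_m; exists 0, d; rewrite mul1n.
Qed.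

Definition pfactorM_divisors k := [seq p ^ i * e | i <- iota 0 k.+1, e <- divisors m].

Lemma logn_pfactorM i e : e %| m -> logn p (p ^ i * e) = i.
Proof.
move=> e_m; rewrite lognM ?expn_gt0 ?p_gt0 ?(dvdn_gt0 m_gt0 e_m) // pfactorK //.
by rewrite logn_coprime ?addn0 // (coprime_dvdr e_m p_coprime_m).
Qed.

Lemma uniq_pfactorM_divisors k : uniq (pfactorM_divisors k).
Proof.
apply: allpairs_uniq; [exact: iota_uniq | exact: divisors_uniq |].
move=> [i e] [j f] /allpairsP[[i' e'] [_ e'_m [-> ->]]].
move=> /allpairsP[[j' f'] [_ f'_m [-> ->]]] /= eq_ief.
rewrite -!dvdn_divisors // in e'_m f'_m.
have eq_ij : i' = j' by rewrite -(logn_pfactorM i' e'_m) eq_ief logn_pfactorM.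
by move: eq_ief; rewrite eq_ij => /eqP; rewrite eqn_pmul2l ?expn_gt0 ?p_gt0 // => /eqP ->.
Qed.

Lemma perm_divisors_pfactorM k :
  perm_eq (divisors (p ^ k * m)) (pfactorM_divisors k).
Proof.
apply: uniq_perm; [exact: divisors_uniq | exact: uniq_pfactorM_divisors |] => d.
rewrite -dvdn_divisors ?muln_gt0 ?expn_gt0 ?p_gt0 //; apply/idP/allpairsP.
  case/dvdn_pfactorM => i [e [le_ik e_m ->]].
  by exists (i, e); rewrite mem_iota ltnS -dvdn_divisors.
case=> [[i e]] []; rewrite mem_iota ltnS -dvdn_divisors //= => le_ik e_m ->.
by rewrite dvdn_mul // dvdn_exp2l.
Qed.

Lemma size_divisors_pfactorM k :
  size (divisors (p ^ k * m)) = k.+1 * size (divisors m).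
Proof. by rewrite (perm_size (perm_divisors_pfactorM k)) size_allpairs size_iota. Qed.

Lemma sigma_pfactorM k : sigma (p ^ k * m) = (\sum_(i < k.+1) p ^ i) * sigma m.
Proof.
rewrite /sigma (perm_big _ (perm_divisors_pfactorM k)) big_allpairs_dep /=.
under eq_bigr do rewrite -big_distrr.
by rewrite -big_distrl -(big_mkord xpredT (fun i => p ^ i)).
Qed.

End DivisorsPrimePowerTimesCoprime.

Lemma leq_sum_divisors_sigma n s : 0 < n -> uniq s -> {in s, forall d, d %| n} ->
  \sum_(d <- s) d <= sigma n.
Proof.
move=> n_gt0 uniq_s s_dvd.
have perm_s : perm_eq s [seq d <- divisors n | d \in s].
  apply: uniq_perm; rewrite ?filter_uniq ?divisors_uniq // => d.
  by rewrite mem_filter -dvdn_divisors //; case: (boolP (d \in s)) => // /s_dvd ->.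
rewrite (perm_big _ perm_s) big_filter /sigma [leqRHS](bigID (mem s)) /=.
exact: leq_addr.
Qed.

Lemma leq_sigma_proper_divisor n d : 1 < d < n -> d %| n -> 1 + d + n <= sigma n.
Proof.
move=> /andP[d_gt1 lt_dn] d_n.
have := @leq_sum_divisors_sigma n [:: 1; d; n].
rewrite !big_cons big_nil addn0 addnA; apply; first lia.
  by rewrite /= !inE; apply/and3P; split; apply/negP; lia.
by move=> e; rewrite !inE => /or3P[] /eqP ->; rewrite ?dvd1n ?dvdnn.
Qed.

Lemma even_perfect_Euclid_Euler N : perfect N -> ~~ odd N ->
  exists k, prime (2 ^ k.+1).-1 /\ N = 2 ^ k * (2 ^ k.+1).-1.
Proof.
case=> N_gt0 sigmaN even_N.
have [m coprime_2m defN] := pfactor_coprime (isT : prime 2) N_gt0.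
move: defN; set k := logn 2 N; rewrite mulnC => defN.
have m_gt0 : 0 < m by move: N_gt0; rewrite defN muln_gt0 => /andP[].
have k_gt0 : 0 < k.
  by case: k defN => // defN; move: even_N; rewrite defN mul1n -coprime2n coprime_2m.
set M := (2 ^ k.+1).-1.
have M_ge3 : 3 <= M.
  have : 1 < 2 ^ k by rewrite -[1](expn0 2) ltn_exp2l.
  rewrite /M -subn1 expnS; lia.
have sigmaM : M * sigma m = M.+1 * m.
  have -> : M.+1 = 2 ^ k.+1 by rewrite prednK ?expn_gt0.
  rewrite expnS -mulnA -defN -sigmaN defN sigma_pfactorM //.
  by rewrite /M predn_exp mul1n.
(* M divides M.+1 * m and is coprime to M.+1; then sigma m = m + c leaves no room
   for the divisor c of m = c * M unless c = 1, and sigma M = M + 1 makes M prime. *)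
have /dvdnP[c defm] : M %| m.
  rewrite -(@Gauss_dvdr M M.+1) ?coprimenS //; apply/dvdnP.
  by exists (sigma m); rewrite -sigmaM mulnC.
have sigma_m : sigma m = m + c.
  apply/eqP; rewrite -(@eqn_pmul2l M) ?(leq_trans _ M_ge3) // sigmaM defm; apply/eqP; lia.
have c1 : c = 1.
  apply/eqP; rewrite eqn_leq lt0n; apply/andP; split.
    rewrite leqNgt; apply/negP => c_gt1.
    have lt_cm : c < c * M by rewrite -[ltnLHS]muln1 ltn_pmul2l; lia.
    have := @leq_sigma_proper_divisor m c; rewrite sigma_m defm dvdn_mulr // c_gt1 lt_cm; lia.
  by apply/negP => /eqP c0; move: m_gt0; rewrite defm c0.
subst c; rewrite mul1n in defm; subst m.
exists k; split; last by rewrite defN.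
apply/negP => /negP/primePn[| [d /andP[d_gt1 lt_dM] d_M]]; first lia.
have := @leq_sigma_proper_divisor M d; rewrite sigma_m d_gt1 lt_dM d_M; lia.
Qed.

Lemma T_sqr n : 0 < n -> T n ^ 2 = n ^ size (divisors n).
Proof.
move=> n_gt0.
have divnK_n d : d %| n -> n %/ (n %/ d) = d.
  by move=> d_n; rewrite divnA // mulKn.
have perm_codivisors : perm_eq (divisors n) [seq n %/ d | d <- divisors n].
  apply: uniq_perm; rewrite ?divisors_uniq //.
    rewrite map_inj_in_uniq ?divisors_uniq // => d e.
    by rewrite -!dvdn_divisors // => d_n e_n eq_de; rewrite -(divnK_n d) // eq_de divnK_n.
  move=> d; rewrite -dvdn_divisors //; apply/idP/mapP => [d_n | [e]].
    by exists (n %/ d); rewrite -?dvdn_divisors ?dvdn_div ?divnK_n.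
  by rewrite -dvdn_divisors // => e_n ->; apply: dvdn_div.
rewrite expnS expn1 {2}/T (perm_big _ perm_codivisors) big_map /T -big_split /=.
rewrite (eq_big_seq (fun=> n)) ?big_const_seq ?count_predT ?iter_muln_1 // => d.
by rewrite -dvdn_divisors // => d_n; rewrite mulnC divnK.
Qed.

Section UnitaryDivisorsPrimePowerTimesPrime.

Variables (p q k : nat).
Hypotheses (p_pr : prime p) (q_pr : prime q) (neq_pq : p != q) (k_gt0 : 0 < k).

Let n := p ^ k * q.
Let p_coprime_q : coprime p q. Proof. by rewrite prime_coprime // dvdn_prime2. Qed.
Let q_gt1 : 1 < q. Proof. exact: prime_gt1. Qed.
Let pk_gt1 : 1 < p ^ k. Proof. by rewrite -[1](expn0 p) ltn_exp2l ?prime_gt1. Qed.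
Let n_gt0 : 0 < n. Proof. by rewrite muln_gt0; apply/andP; split; lia. Qed.

Lemma unitary_divisors_pfactor_prime :
  perm_eq [seq d <- divisors n | coprime d (n %/ d)] [:: 1; p ^ k; q; n].
Proof.
apply: uniq_perm; rewrite ?filter_uniq ?divisors_uniq //.
  have neq_pk_q : p ^ k != q.
    apply: contraTneq p_coprime_q => <-; rewrite prime_coprime // negbK dvdn_exp //.
  rewrite /= !inE (negPf neq_pk_q) /n; apply/and3P; split; apply/negP; nia.
move=> d; rewrite mem_filter -dvdn_divisors // !inE.
apply/idP/idP => [/andP[unitary_d d_n] | ]; last first.
  case/or4P=> /eqP ->; rewrite ?dvd1n ?dvdnn ?divn1 ?divnn ?n_gt0 ?coprime1n ?coprimen1 //.
    by rewrite mulKn ?expn_gt0 ?prime_gt0 // coprimeXl // dvdn_mulr.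
  by rewrite mulnK ?prime_gt0 // coprime_sym coprimeXl // dvdn_mull.
have [i [e [le_ik e_q def_d]]] := dvdn_pfactorM p_pr d_n.
have logn_p := logn_pfactorM p_pr p_coprime_q (prime_gt0 q_pr).
have i_0_or_k : (i == 0) || (i == k).
  apply: contraT; rewrite negb_or -lt0n => /andP[i_gt0 i_neqk].
  have p_dvd_d : p %| d by rewrite def_d dvdn_mulr // dvdn_exp.
  have : 0 < logn p (n %/ d).
    by rewrite logn_div // def_d !logn_p ?dvdnn // subn_gt0 ltn_neqAle i_neqk.
  rewrite logn_gt0 mem_primes => /and3P[_ _ p_dvd_cod].
  by have := coprime_dvdl p_dvd_d unitary_d; rewrite prime_coprime // p_dvd_cod.
have /primeP[_ /(_ e e_q) e_1_or_q] := q_pr.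
case/orP: i_0_or_k => /eqP i_0_or_k; case/orP: e_1_or_q => /eqP def_e;
  by rewrite def_d i_0_or_k def_e ?muln1 ?mul1n eqxx ?orbT.
Qed.

Lemma Tstar_pfactor_prime : Tstar n = n ^ 2.
Proof.
rewrite /Tstar -big_filter (perm_big _ unitary_divisors_pfactor_prime).
by rewrite !big_cons big_nil /= mul1n muln1 mulnA.
Qed.

Lemma T_Tstar_pfactor_prime : T (Tstar n) = n ^ (3 * (2 * k).+1).
Proof.
have size_divisors_n2 : size (divisors (n ^ 2)) = (2 * k).+1 * 3.
  have coprime_p_q2 : coprime p (q ^ 2) by rewrite coprimeXr.
  rewrite /n expnMn -expnM (mulnC k) size_divisors_pfactorM ?expn_gt0 ?prime_gt0 //.
  by rewrite -[q ^ 2]muln1 size_divisors_pfactorM ?coprimen1.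
apply: (@expIn 2) => //.
rewrite Tstar_pfactor_prime T_sqr ?expn_gt0 ?n_gt0 // size_divisors_n2 -!expnM.
by congr (_ ^ _); lia.
Qed.

End UnitaryDivisorsPrimePowerTimesPrime.

Lemma KT0Tstar_perfect_even_perfect k K : prime (2 ^ k.+1).-1 ->
  KT0Tstar_perfect K (2 ^ k * (2 ^ k.+1).-1) <-> K = 3 * (2 * k).+1.
Proof.
set M := (2 ^ k.+1).-1 => M_pr.
have k_gt0 : 0 < k by case: k @M M_pr.
have M_odd : odd M by rewrite /M -subn1 oddB ?expn_gt0 // oddX.
have neq_2M : 2 != M by apply: contraTneq M_odd => <-.
have N_gt1 : 1 < 2 ^ k * M.
  have := prime_gt1 M_pr; have : 1 < 2 ^ k by rewrite -[1](expn0 2) ltn_exp2l.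
  nia.
rewrite /KT0Tstar_perfect T_Tstar_pfactor_prime //.
split=> [[_ [_ /eqP]] | ->]; first by rewrite eqn_exp2l // => /eqP.
by split; first lia.
Qed.

Theorem mainTheorem14 (p : nat) (hp : prime p) (hM : prime (2 ^ p - 1)) :
  forall N : nat, perfect N -> ~~ odd N ->
    (KT0Tstar_perfect (3 * (2 * p - 1)) N <-> N = 2 ^ (p - 1) * (2 ^ p - 1)).
Proof.
move=> N N_perfect N_even.
case: p hp hM => [//|k] _; rewrite !subn1 /= => M_pr.
split=> [KT_N | ->]; last by apply/KT0Tstar_perfect_even_perfect => //; lia.
have [j [Mj_pr defN]] := even_perfect_Euclid_Euler N_perfect N_even.
move: KT_N; rewrite defN KT0Tstar_perfect_even_perfect // => eq_K.
by have -> : j = k by lia.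
Qed.
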